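(* Let $\mathcal B=(B_1,\dots,B_d)$ be a splitting of order $d$ of $B_J\in\mathbb R^{n\times n}$, let $\lambda\ne0$ be an eigenvalue of $T(\mathcal B)$ and let $[\alpha_1^T,\dots,\alpha_d^T]^T$ (with $\alpha_p\in\mathbb C^n$) be an associated eigenvector. Then $\alpha_p\ne0$ for every $p=1,\dots,d$.
   Context: For $B\in\mathbb R^{n\times n}$, a splitting of $B$ of order $d\ge1$ is an ordered $d$-tuple $\mathcal B=(B_1,\dots,B_d)$ of real $n\times n$ matrices with $B_p\neq O$ for all $p$, $\sum_{p=1}^d B_p=B$, and $B_p\circ B_q=O$ (Hadamard product) for $p\ne q$. The iteration matrix of $\mathcal B$ is the $dn\times dn$ matrix $T(\mathcal B)=(I_{dn}-\mathcal L)^{-1}\mathcal U$, where $\mathcal L,\mathcal U$ are $d\times d$ block matrices with $n\times n$ blocks, $\mathcal L_{ij}=B_j$ if $i>j$ and $O$ otherwise, $\mathcal U_{ij}=B_j$ if $i\le j$ and $O$ otherwise. *)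

From HB Require Import structures.
From mathcomp Require Import all_boot all_order all_algebra.
From mathcomp Require Import reals complex.
Set Implicit Arguments. Unset Strict Implicit. Unset Printing Implicit Defensive.
Import Order.TTheory GRing.Theory Num.Theory.
Local Open Scope ring_scope.
Local Open Scope complex_scope.

Section Splitting.
Variables (R : realType) (n d : nat).

Definition hadamard (A C : 'M[R]_n) : 'M[R]_n := map2_mx *%R A C.

Definition is_splitting (B : 'M[R]_n) (Bs : 'I_d -> 'M[R]_n) : Prop :=
  [/\ (0 < d)%N,
      forall p, Bs p != 0,
      \sum_(p < d) Bs p = B &
      forall p q, p != q -> hadamard (Bs p) (Bs q) = 0].

Definition splitL (Bs : 'I_d -> 'M[R]_n) :
  'M[R]_(\sum_(i < d) n, \sum_(j < d) n) :=
  \mxblock_(i < d, j < d) (if (j < i)%N then Bs j else 0).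

Definition splitU (Bs : 'I_d -> 'M[R]_n) :
  'M[R]_(\sum_(i < d) n, \sum_(j < d) n) :=
  \mxblock_(i < d, j < d) (if (i <= j)%N then Bs j else 0).

Definition iter_mx (Bs : 'I_d -> 'M[R]_n) : 'M[R]_(\sum_(i < d) n) :=
  invmx (1%:M - splitL Bs) *m splitU Bs.

Definition vblock (v : 'cV[R[i]]_(\sum_(i < d) n)) (p : 'I_d) : 'cV[R[i]]_n :=
  @submxcol _ d (fun=> n) 1 v p.

End Splitting.

From HB Require Import structures.
From mathcomp Require Import all_boot all_order all_algebra.
From mathcomp Require Import reals complex.
Set Implicit Arguments. Unset Strict Implicit. Unset Printing Implicit Defensive.
Import Order.TTheory GRing.Theory Num.Theory.
Local Open Scope ring_scope.

(* Write the eigen-equation [U a = lam (1 - L) a] blockwise, with the total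
   [S = \sum_j B_j a_j] and the partial sums [P_i = \sum_(j < i) B_j a_j]:
   it becomes [lam a_i = S + (lam - 1) P_i].  If [a_p = 0], then [P_i = P_p]
   as long as the blocks in between vanish, so induction gives [a_i = 0] for
   all [i >= p]; hence [S = P_p], and the equation at [p] reads [lam S = 0].
   Now [lam a_i = (lam - 1) P_i], and the same induction started at [0] kills
   every block.  Invertibility of [1 - L] follows from the same triangular
   recurrence. *)

Lemma ord_ind_from d (P : 'I_d -> Prop) (k : nat) :
  (forall i : 'I_d, (k <= i)%N -> (forall j : 'I_d, (k <= j < i)%N -> P j) -> P i) ->
  forall i : 'I_d, (k <= i)%N -> P i.
Proof.
move=> IH; suff P_lt m : forall i : 'I_d, (k <= i < m)%N -> P i.
  by move=> i ki; apply: (P_lt i.+1); rewrite ki /=.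
elim: m => [|m IHm] i /andP[ki im] //; apply: IH => // j /andP[kj ji].
by apply: IHm; rewrite kj (leq_trans ji).
Qed.

Section BlockMask.
Variables (K : pzRingType) (n d : nat).

Definition mxblock_mask (P : rel 'I_d) (Bs : 'I_d -> 'M[K]_n) :
    'M[K]_(\sum_(i < d) n, \sum_(j < d) n) :=
  \mxblock_(i < d, j < d) (if P i j then Bs j else 0).

Lemma submxcolZ m (c : K) (X : 'M[K]_(\sum_(i < d) n, m)) i :
  @submxcol _ d (fun=> n) _ (c *: X) i = c *: submxcol X i.
Proof. by apply/matrixP => a b; rewrite !mxE. Qed.

Lemma submxcol_mul_mxblock_mask P Bs m (X : 'M[K]_(\sum_(i < d) n, m)) i :
  submxcol (mxblock_mask P Bs *m X) i
    = \sum_(j | P i j) Bs j *m @submxcol _ d (fun=> n) _ X j.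
Proof.
rewrite -[X in LHS]submxcolK mul_mxblock_mxrow mxcolK [RHS]big_mkcond.
by apply: eq_bigr => j _; case: ifP => // _; rewrite mul0mx.
Qed.

End BlockMask.

Lemma map_mxblock_mask (K L : pzRingType) n d (f : {rmorphism K -> L})
    (P : rel 'I_d) (Bs : 'I_d -> 'M[K]_n) :
  map_mx f (mxblock_mask P Bs) = mxblock_mask P (fun j => map_mx f (Bs j)).
Proof.
apply/matrixP => a b; rewrite !mxE.
by case: ifP => _; rewrite ?mxE ?raddf0.
Qed.

Section BlockTriangular.
Variables (K : fieldType) (n d : nat) (Bs : 'I_d -> 'M[K]_n).

Notation lower := (mxblock_mask (fun i j : 'I_d => (j < i)%N) Bs).
Notation upper := (mxblock_mask (fun i j : 'I_d => (i <= j)%N) Bs).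

Lemma mulmx_1B_strict_lower_eq0 m (X : 'M[K]_(\sum_(i < d) n, m)) :
  (1%:M - lower) *m X = 0 -> X = 0.
Proof.
move=> /(congr1 (fun M => @submxcol _ d (fun=> n) _ M _)) lowerX.
have X_eq i :
    submxcol X i = \sum_(j : 'I_d | (j < i)%N) Bs j *m @submxcol _ d (fun=> n) _ X j.
  move: (lowerX i); rewrite mulmxBl mul1mx submxcolB submxcol0.
  by rewrite submxcol_mul_mxblock_mask => /eqP; rewrite subr_eq0 => /eqP.
rewrite -[X]submxcolK -(mxcol0 (p_ := fun=> n)); apply: eq_mxcol => i.
apply: (@ord_ind_from d (fun i => submxcol X i = 0) 0) => // {}i _ IH.
by rewrite X_eq big1 // => j ji; rewrite IH ?mulmx0.
Qed.

Lemma unitmx_1B_strict_lower : 1%:M - lower \in unitmx.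
Proof.
rewrite -row_full_unit -cokermx_eq0; apply/eqP/mulmx_1B_strict_lower_eq0.
exact: mulmx_coker.
Qed.

Lemma eigenvector_blocks (lam : K) (v : 'cV[K]_(\sum_(i < d) n)) :
  invmx (1%:M - lower) *m upper *m v = lam *: v ->
  forall i : 'I_d,
    \sum_(j : 'I_d | (i <= j)%N) Bs j *m @submxcol _ d (fun=> n) _ v j
    = lam *: (submxcol v i - \sum_(j : 'I_d | (j < i)%N) Bs j *m submxcol v j).
Proof.
move=> eigen_v i.
have upper_v : upper *m v = lam *: ((1%:M - lower) *m v).
  by rewrite scalemxAr -eigen_v !mulmxA mulmxV ?mul1mx ?unitmx_1B_strict_lower.
move: (congr1 (fun M => @submxcol _ d (fun=> n) _ M i) upper_v) => /=.
by rewrite submxcolZ mulmxBl mul1mx submxcolB !submxcol_mul_mxblock_mask.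
Qed.

End BlockTriangular.

Section EigenvectorBlocks.
Variables (K : fieldType) (n d : nat) (Bs : 'I_d -> 'M[K]_n).
Variables (a : 'I_d -> 'cV[K]_n) (lam : K).
Hypothesis lam_neq0 : lam != 0.
Hypothesis eigen_a : forall i : 'I_d,
  \sum_(j : 'I_d | (i <= j)%N) Bs j *m a j
    = lam *: (a i - \sum_(j : 'I_d | (j < i)%N) Bs j *m a j).

Let partial (k : nat) := \sum_(j : 'I_d | (j < k)%N) Bs j *m a j.
Let total := \sum_(j : 'I_d) Bs j *m a j.

Lemma total_partial : total = partial d.
Proof. by apply: eq_bigl => j; rewrite ltn_ord. Qed.

Lemma partial_eq_from k l : (k <= l)%N ->
  (forall j : 'I_d, (k <= j < l)%N -> a j = 0) -> partial l = partial k.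
Proof.
move=> kl a_eq0; rewrite /partial (bigID (fun j : 'I_d => (j < k)%N)) /=.
rewrite [X in _ + X]big1 ?addr0 => [|j /andP[jl]]; last first.
  by rewrite -leqNgt => kj; rewrite a_eq0 ?mulmx0 ?kj.
apply: eq_bigl => j.
by case: (ltnP j k) => jk; rewrite ?andbT ?andbF // (leq_trans jk kl).
Qed.

Lemma scale_block i : lam *: a i = total + (lam - 1) *: partial i.
Proof.
have total_split : total = partial i + \sum_(j : 'I_d | (i <= j)%N) Bs j *m a j.
  rewrite /total (bigID (fun j : 'I_d => (j < i)%N)) /=; congr (_ + _).
  by apply: eq_bigl => j; rewrite -leqNgt.
rewrite total_split eigen_a scalerBr scalerBl scale1r -/(partial i).
by rewrite addrC addrA subrK addrC subrK.
Qed.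

Lemma blocks_eq0_from k : total + (lam - 1) *: partial k = 0 ->
  forall i : 'I_d, (k <= i)%N -> a i = 0.
Proof.
move=> total_k; apply: ord_ind_from => i ki IH.
apply: (scalerI lam_neq0).
by rewrite scaler0 scale_block (partial_eq_from ki IH) total_k.
Qed.

Lemma eigen_blocks_eq0 p : a p = 0 -> forall i, a i = 0.
Proof.
move=> a_p.
have tail_eq0 : forall i : 'I_d, (p <= i)%N -> a i = 0.
  by apply: (blocks_eq0_from (k := p)); rewrite -scale_block a_p scaler0.
have total_eq0 : total = 0.
  have total_p : total = partial p.
    rewrite total_partial (partial_eq_from (ltnW (ltn_ord p))) //.
    by move=> j /andP[/tail_eq0].
  apply: (scalerI lam_neq0).
  rewrite scaler0 -{1}(subrK 1 lam) scalerDl scale1r addrC {2}total_p.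
  by rewrite -scale_block a_p scaler0.
move=> i; apply: (blocks_eq0_from (k := 0)) => //.
by rewrite total_eq0 /partial big_pred0 // scaler0 addr0.
Qed.

End EigenvectorBlocks.

Local Open Scope complex_scope.

Theorem proposition2p2 (R : realType) (n d : nat) (BJ : 'M[R]_n)
    (Bs : 'I_d -> 'M[R]_n) (lambda : R[i])
    (v : 'cV[R[i]]_(\sum_(i < d) n)) :
  is_splitting BJ Bs ->
  lambda != 0 ->
  v != 0 ->
  map_mx (fun x : R => x%:C) (iter_mx Bs) *m v = lambda *: v ->
  forall p : 'I_d, vblock v p != 0.
Proof.
move=> _ lambda_neq0 v_neq0 eigen_v p; apply: contra_neq v_neq0 => v_p.
have iter_mxE : iter_mx Bs =
    invmx (1%:M - mxblock_mask (fun i j : 'I_d => (j < i)%N) Bs)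
      *m mxblock_mask (fun i j : 'I_d => (i <= j)%N) Bs by [].
move: eigen_v; rewrite iter_mxE map_mxM map_invmx map_mxB map_mx1 !map_mxblock_mask.
move=> /eigenvector_blocks/eigen_blocks_eq0 blocks_eq0.
have {}blocks_eq0 := blocks_eq0 lambda_neq0 p v_p.
by rewrite -[v]submxcolK -(mxcol0 (p_ := fun=> n)); apply: eq_mxcol.
Qed.
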